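(* In the setting described in the context, let $(\rho,y,x)$ together with symmetric matrices $W^1,\dots,W^m\in\mathbb{S}^n$ satisfy the constraints defining $\mathcal{R}_{\mathrm{QP}}$. Then for each $i\in[m]$, \[ \begin{pmatrix}\rho^i&(y^i)^\top\\ y^i&W^i\end{pmatrix}\succeq0 \quad\Longleftrightarrow\quad \begin{pmatrix}a_{i0}+a_i^\top x&1&x^\top\\ 1&\rho^i&(y^i)^\top\\ x&y^i&W^i\end{pmatrix}\succeq0 . \] Consequently, adding either family of constraints (over all $i\in[m]$) to $\mathcal{R}_{\mathrm{QP}}$ yields the same set.
   Context: Let $m,n,p$ be integers with $0\le p\le n$, $a_{i0}\in\mathbb{R}$, $a_i\in\mathbb{R}^n$ ($i\in[m]$), and let $\bar Cx\le\bar d$ be a linear system that includes $0\le x_j\le1$ for $j\in[p]$, with $P=\{x\mid\bar Cx\le\bar d\}$ nonempty and bounded and $a_{i0}+a_i^\top x>0$ on $P$. The constraints defining $\mathcal{R}_{\mathrm{QP}}$ on $(\rho,y,x,W^1,\dots,W^m)$, with $\rho=(\rho^i)$, $y=(y^i)$, $y^i\in\mathbb{R}^n$, are, for all $i\in[m]$: $\bar CW^i\bar C^\top-\bar d(y^i)^\top\bar C^\top-\bar Cy^i\bar d^\top+\rho^i\bar d\bar d^\top\ge0$ (entrywise); $a_{i0}\rho^i+a_i^\top y^i=1$; $\rho^i\ge0$; $x_j=a_{i0}y^i_j+\sum_{k=1}^na_{ik}W^i_{jk}$ for $j\in[n]$; $\bar Cy^i\le\rho^i\bar d$; $W^i_{jj}=y^i_j$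 for $j\in[p]$; and $\bar Cx\le\bar d$. $\mathbb{S}^n$ denotes symmetric matrices and $\succeq0$ positive semidefiniteness. *)

From HB Require Import structures.
From mathcomp Require Import all_boot all_order all_algebra.
Set Implicit Arguments. Unset Strict Implicit. Unset Printing Implicit Defensive.
Import Order.TTheory GRing.Theory Num.Theory.
Local Open Scope ring_scope.

Definition psd (R : realFieldType) (k : nat) (M : 'M[R]_k) : Prop :=
  M^T = M /\ forall v : 'rV[R]_k, 0 <= (v *m M *m v^T) 0 0.

Definition cvle (R : realFieldType) (k : nat) (u w : 'cV[R]_k) : Prop :=
  forall r, u r 0 <= w r 0.

Definition inP (R : realFieldType) (k n : nat) (C : 'M[R]_(k, n)) (d : 'cV[R]_k)
  (x : 'cV[R]_n) : Prop := cvle (C *m x) d.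

Definition dotv (R : realFieldType) (n : nat) (a x : 'cV[R]_n) : R := (a^T *m x) 0 0.

Definition in_RQP (R : realFieldType) (m n p k : nat)
  (C : 'M[R]_(k, n)) (d : 'cV[R]_k) (a0 : 'I_m -> R) (a : 'I_m -> 'cV[R]_n)
  (rho : 'I_m -> R) (y : 'I_m -> 'cV[R]_n) (x : 'cV[R]_n) (W : 'I_m -> 'M[R]_n)
  : Prop :=
  (forall i, (W i)^T = W i) /\
  (forall i, forall r s : 'I_k,
     0 <= (C *m W i *m C^T - d *m (y i)^T *m C^T - C *m y i *m d^T
           + rho i *: (d *m d^T)) r s) /\
  (forall i, a0 i * rho i + dotv (a i) (y i) = 1) /\
  (forall i, 0 <= rho i) /\
  (forall i, forall j : 'I_n,
     x j 0 = a0 i * y i j 0 + \sum_(l < n) a i l 0 * W i j l) /\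
  (forall i, cvle (C *m y i) (rho i *: d)) /\
  (forall i, forall j : 'I_n, (j < p)%N -> W i j j = y i j 0) /\
  inP C d x.

Definition mat2 (R : realFieldType) (n : nat) (rho : R) (y : 'cV[R]_n)
  (W : 'M[R]_n) : 'M[R]_(1 + n) :=
  block_mx (rho%:M : 'M[R]_1) y^T y W.

Definition mat3 (R : realFieldType) (n : nat) (c rho : R) (x y : 'cV[R]_n)
  (W : 'M[R]_n) : 'M[R]_((1 + 1) + n) :=
  block_mx (block_mx (c%:M : 'M[R]_1) 1 1 (rho%:M : 'M[R]_1))
           (col_mx x^T y^T) (row_mx x y) W.

From HB Require Import structures.
From mathcomp Require Import all_boot all_order all_algebra.
Import Order.TTheory GRing.Theory Num.Theory.
Local Open Scope ring_scope.

Set Implicit Arguments. Unset Strict Implicit.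

(* The 3x3 block matrix of the theorem is a congruence transform
   of the 2x2 one: with c = a_{i0} + a_i^T x and the lifting matrix
       T = [a_{i0}  1  0 ; a_i  0  I]   ((1+n) x (1+1+n)),
   the identity  mat3 c rho x y W = T^T (mat2 rho y W) T  holds as soon as
   W is symmetric, x = a_{i0} y + W a_i and a_{i0} rho + a_i^T y = 1 — exactly
   the (linearisation) constraints of R_QP.  Since T has a right inverse S
   (selecting the last 1+n coordinates), the congruence is invertible on the
   relevant side: psd M implies psd (T^T M T), and psd (T^T M T) implies
   psd (S^T T^T M T S), i.e. psd M. *)

Lemma psd_congr (R : realFieldType) (k l : nat) (M : 'M[R]_k) (P : 'M[R]_(k, l)) :
  psd M -> psd (P^T *m M *m P).
Proof.
move=> [symM nnegM]; split; first by rewrite !trmx_mul trmxK symM mulmxA.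
by move=> v; have := nnegM (v *m P^T); rewrite trmx_mul trmxK !mulmxA.
Qed.

(* A congruence by a matrix T with a right inverse S also reflects
   semidefiniteness, since M = S^T (T^T M T) S. *)
Lemma psd_congr_rinv (R : realFieldType) (k l : nat) (M : 'M[R]_k)
    (T : 'M[R]_(k, l)) (S : 'M[R]_(l, k)) :
  T *m S = 1%:M -> psd M <-> psd (T^T *m M *m T).
Proof.
move=> TS; split; first exact: psd_congr.
move=> /(psd_congr S); suff -> : S^T *m (T^T *m M *m T) *m S = M by [].
by rewrite !mulmxA -trmx_mul -mulmxA TS trmx1 mul1mx mulmx1.
Qed.

(* The lifting matrix T = [a0 1 0; a 0 I] and its right inverse S = [0; 1; 0 I]
   (S drops the first coordinate of a vector of size 1+1+n). *)
Definition lift_mat (R : realFieldType) (n : nat) (a0 : R) (a : 'cV[R]_n) :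
  'M[R]_(1 + n, (1 + 1) + n) :=
  block_mx (row_mx (a0%:M : 'M[R]_1) 1) 0 (row_mx a 0) 1.

Definition drop_mat (R : realFieldType) (n : nat) : 'M[R]_((1 + 1) + n, 1 + n) :=
  block_mx (col_mx (0 : 'M[R]_1) 1) 0 0 1.

Lemma lift_matK (R : realFieldType) (n : nat) (a0 : R) (a : 'cV[R]_n) :
  lift_mat a0 a *m drop_mat R n = 1%:M.
Proof.
rewrite /lift_mat /drop_mat mulmx_block !mul_row_col.
by rewrite !mulmx0 !mul0mx !mulmx1 !addr0 !add0r -scalar_mx_block.
Qed.

Lemma dotv_mx (R : realFieldType) (n : nat) (u v : 'cV[R]_n) :
  u^T *m v = (dotv u v)%:M.
Proof. exact: mx11_scalar. Qed.

Lemma dotvC (R : realFieldType) (n : nat) (u v : 'cV[R]_n) : dotv u v = dotv v u.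
Proof. by rewrite /dotv -[u^T *m v]trmxK trmx_mul trmxK mxE. Qed.

Lemma mat3_lift (R : realFieldType) (n : nat) (a0 rho : R) (a x y : 'cV[R]_n)
    (W : 'M[R]_n) :
  W^T = W -> x = a0 *: y + W *m a -> a0 * rho + dotv a y = 1 ->
  mat3 (a0 + dotv a x) rho x y W = (lift_mat a0 a)^T *m mat2 rho y W *m lift_mat a0 a.
Proof.
move=> symW xE normE.
have xTE : x^T = a0 *: y^T + a^T *m W by rewrite xE linearD linearZ /= trmx_mul symW.
rewrite /mat3 /mat2 /lift_mat tr_block_mx !tr_row_mx !trmx0 !trmx1 tr_scalar_mx.
rewrite !mulmx_block !mul_col_mx !mul_mx_row.
rewrite !mulmx0 !mul0mx !mulmx1 !mul1mx ?addr0 ?add0r.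
rewrite !add_col_mx !add_row_mx !mul_col_mx add_col_mx !addr0.
rewrite !mul_scalar_mx !mul_mx_scalar scale_scalar_mx -xTE -xE.
rewrite !dotv_mx -raddfD /= normE [block_mx _%:M _ _ _]block_mxEh.
by rewrite !scale_scalar_mx -!raddfD /= mulr1 mulrC !(dotvC _ a) normE.
Qed.

Lemma RQP_x_lin (R : realFieldType) (m n p k : nat)
    (C : 'M[R]_(k, n)) (d : 'cV[R]_k) (a0 : 'I_m -> R) (a : 'I_m -> 'cV[R]_n)
    (rho : 'I_m -> R) (y : 'I_m -> 'cV[R]_n) (x : 'cV[R]_n) (W : 'I_m -> 'M[R]_n) :
  in_RQP p C d a0 a rho y x W -> forall i, x = a0 i *: y i + W i *m a i.
Proof.
move=> [_ [_ [_ [_ [xE _]]]]] i; apply/matrixP => j l; rewrite (ord1 l) (xE i) !mxE.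
by congr (_ + _); apply: eq_bigr => l' _; rewrite mulrC.
Qed.

Lemma RQP_mat2_mat3 (R : realFieldType) (m n p k : nat)
    (C : 'M[R]_(k, n)) (d : 'cV[R]_k) (a0 : 'I_m -> R) (a : 'I_m -> 'cV[R]_n)
    (rho : 'I_m -> R) (y : 'I_m -> 'cV[R]_n) (x : 'cV[R]_n) (W : 'I_m -> 'M[R]_n) :
  in_RQP p C d a0 a rho y x W -> forall i,
  psd (mat2 (rho i) (y i) (W i)) <->
  psd (mat3 (a0 i + dotv (a i) x) (rho i) x (y i) (W i)).
Proof.
move=> inR i; have [symW [_ [normE _]]] := inR.
rewrite (mat3_lift (symW i) (RQP_x_lin inR i) (normE i)).
exact/psd_congr_rinv/lift_matK.
Qed.

Theorem proposition7 (R : realFieldType) (m n p k : nat)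
  (a0 : 'I_m -> R) (a : 'I_m -> 'cV[R]_n)
  (C : 'M[R]_(k, n)) (d : 'cV[R]_k)
  (Hpn : (p <= n)%N)
  (* the system contains 0 <= x_j <= 1 for j in [p] *)
  (Hbox : forall j : 'I_n, (j < p)%N ->
     (exists r : 'I_k, row r C = - (delta_mx 0 j) /\ d r 0 = 0) /\
     (exists r : 'I_k, row r C = delta_mx 0 j /\ d r 0 = 1))
  (* P nonempty and bounded *)
  (Hne : exists x : 'cV[R]_n, inP C d x)
  (Hbd : exists B : R, forall x : 'cV[R]_n, inP C d x -> forall j, `|x j 0| <= B)
  (* a_{i0} + a_i^T x > 0 on P *)
  (Hpos : forall i (x : 'cV[R]_n), inP C d x -> 0 < a0 i + dotv (a i) x) :
  (forall rho y x W, in_RQP p C d a0 a rho y x W ->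
     forall i, psd (mat2 (rho i) (y i) (W i)) <->
               psd (mat3 (a0 i + dotv (a i) x) (rho i) x (y i) (W i)))
  /\
  (forall rho y x W,
     (in_RQP p C d a0 a rho y x W /\ forall i, psd (mat2 (rho i) (y i) (W i))) <->
     (in_RQP p C d a0 a rho y x W /\
        forall i, psd (mat3 (a0 i + dotv (a i) x) (rho i) x (y i) (W i)))).
Proof.
split; first exact: RQP_mat2_mat3.
move=> rho y x W; split=> -[inR psdi]; split=> // i; exact/(RQP_mat2_mat3 inR).
Qed.
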